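(* $\{1,2,4\}\in\mathcal{I}\setminus\mathcal{I}_1$.
   Context: For a summable sequence $\mathbf{x}=(x_n)$ of positive reals, $\mathcal{A}(\mathbf{x})=\{\sum_{n\in A}x_n: A\subseteq\mathbb{N}\}$ is its achievement set and its cardinal function $f$ assigns to $x\in\mathcal{A}(\mathbf{x})$ the cardinality (a positive integer, $\omega$, or $\mathfrak{c}$) of $\{(\varepsilon_n)\in\{0,1\}^{\mathbb{N}}:\sum\varepsilon_nx_n=x\}$. $\mathcal{I}$ is the family of ranges of cardinal functions of such sequences whose achievement set is a finite union of (nondegenerate) closed intervals; $\mathcal{I}_1$ is the family of ranges of cardinal functions of such sequences whose achievement set is a single closed interval. *)

From Stdlib Require Import Reals List.
Open Scope R_scope.

Definition pos_summable (x : nat -> R) : Prop :=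
  (forall n, 0 < x n) /\ exists l, infinite_sum x l.

(* eps : nat -> bool is the indicator of a subset A of N;
   [represents x eps y] : sum_{n in A} x_n = y. *)
Definition represents (x : nat -> R) (eps : nat -> bool) (y : R) : Prop :=
  infinite_sum (fun n => if eps n then x n else 0) y.

Definition achievement_set (x : nat -> R) (y : R) : Prop :=
  exists eps, represents x eps y.

Definition has_card {T : Type} (P : T -> Prop) (n : nat) : Prop :=
  exists l : list T, length l = n /\ NoDup l /\ (forall e, P e <-> In e l).

(* The range of the cardinal function f of x equals the finite set S
   of positive integers: every value f(y), y in A(x), is a finite cardinal
   in S, and every element of S is attained. *)
Definition cardfun_range_eq (x : nat -> R) (S : list nat) : Prop :=
  (forall y, achievement_set x y ->
     exists n, In n S /\ has_card (fun eps => represents x eps y) n) /\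
  (forall n, In n S -> exists y, achievement_set x y /\
     has_card (fun eps => represents x eps y) n).

Definition finite_union_intervals (A : R -> Prop) : Prop :=
  exists I : list (R * R),
    (forall p, In p I -> fst p < snd p) /\
    (forall y, A y <-> exists p, In p I /\ fst p <= y <= snd p).

Definition single_interval (A : R -> Prop) : Prop :=
  exists a b, a < b /\ (forall y, A y <-> a <= y <= b).

Definition in_I (S : list nat) : Prop :=
  exists x, pos_summable x /\ finite_union_intervals (achievement_set x)
            /\ cardfun_range_eq x S.

Definition in_I1 (S : list nat) : Prop :=
  exists x, pos_summable x /\ single_interval (achievement_set x)
            /\ cardfun_range_eq x S.

(* For x = (3, 3, 1, 1/2, 1/4, ...) the tail from index 2 is binary: each term is the sum of
   all later ones, so every t in [0, 2] is a tail subsum in one or two ways.  The head adds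
   0, 3 or 6, the value 3 in two ways, and these shifts of [0, 2] are disjoint; so the
   achievement set is [0, 2] u [3, 5] u [6, 8] and the multiplicities are the products
   1, 2 and 4.

   Conversely, let the achievement set be an interval and sort x decreasingly.  Then Kakeya's
   condition x n <= sum_(k > n) x k holds.  If it is strict for infinitely many n, some point
   has five (indeed arbitrarily many) representations.  Otherwise x is binary from a least
   index N.  If N = 0 no point has more than two representations, so 4 is not attained.  If
   N = M + 1, the strict inequality at M yields a point with five representations when
   x (M - 1) = x M, and a point with exactly three otherwise. *)

From Stdlib Require Import Reals List Lra Lia Arith FinFun.
From Stdlib Require Import FunctionalExtensionality ClassicalEpsilon.
Import ListNotations.
Open Scope R_scope.

(** * Partial sums *)

(* [psum a n] has [n] terms, unlike [sum_f_R0 a n]. *)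
Fixpoint psum (a : nat -> R) (n : nat) : R :=
  match n with O => 0 | S k => psum a k + a k end.

Definition has_sum (a : nat -> R) (l : R) : Prop := Un_cv (psum a) l.

Lemma psum_S_sum_f_R0 (a : nat -> R) n : psum a (S n) = sum_f_R0 a n.
Proof. induction n; simpl in *; [lra|]. rewrite <- IHn. simpl. lra. Qed.

Lemma infinite_sum_has_sum a l : infinite_sum a l <-> has_sum a l.
Proof.
  split; intros H eps Heps; destruct (H eps Heps) as [N HN].
  - exists (S N). intros n Hn. destruct n; [lia|]. rewrite psum_S_sum_f_R0. apply HN. lia.
  - exists N. intros n Hn. rewrite <- psum_S_sum_f_R0. apply HN. lia.
Qed.

Lemma has_sum_unique a l1 l2 : has_sum a l1 -> has_sum a l2 -> l1 = l2.
Proof. apply UL_sequence. Qed.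

Lemma psum_eq a b n : (forall i, (i < n)%nat -> a i = b i) -> psum a n = psum b n.
Proof. induction n; intros H; simpl; auto. rewrite IHn, H; auto. Qed.

Lemma psum_eq0 a n : (forall i, (i < n)%nat -> a i = 0) -> psum a n = 0.
Proof. induction n; intros H; simpl; auto. rewrite IHn, H; [lra|lia|auto]. Qed.

Lemma has_sum_ext a b l : (forall n, a n = b n) -> has_sum a l -> has_sum b l.
Proof.
  intros H Ha eps He. destruct (Ha eps He) as [N HN]. exists N. intros n Hn.
  rewrite <- (psum_eq a b n (fun i _ => H i)). auto.
Qed.

Lemma has_sum_plus a b la lb :
  has_sum a la -> has_sum b lb -> has_sum (fun i => a i + b i) (la + lb).
Proof.
  intros Ha Hb. assert (E : forall n, psum (fun i => a i + b i) n = psum a n + psum b n).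
  { induction n; simpl; [lra|]. rewrite IHn. lra. }
  intros eps He. destruct (CV_plus _ _ _ _ Ha Hb eps He) as [N HN].
  exists N. intros n Hn. rewrite E. auto.
Qed.

Lemma has_sum_minus a b la lb :
  has_sum a la -> has_sum b lb -> has_sum (fun i => a i - b i) (la - lb).
Proof.
  intros Ha Hb. assert (E : forall n, psum (fun i => a i - b i) n = psum a n - psum b n).
  { induction n; simpl; [lra|]. rewrite IHn. lra. }
  intros eps He. destruct (CV_minus _ _ _ _ Ha Hb eps He) as [N HN].
  exists N. intros n Hn. rewrite E. auto.
Qed.

Section NonnegativeSeries.

Variable a : nat -> R.
Hypothesis a_nonneg : forall i, 0 <= a i.

Lemma psum_nonneg n : 0 <= psum a n.
Proof. induction n; simpl; [lra|]. specialize (a_nonneg n). lra. Qed.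

Lemma psum_le_sum l n : has_sum a l -> psum a n <= l.
Proof.
  intros H. apply (growing_ineq (psum a)); auto.
  intro k. simpl. specialize (a_nonneg k). lra.
Qed.

Lemma term_le_sum l i : has_sum a l -> a i <= l.
Proof.
  intros H. pose proof (psum_le_sum l (S i) H). simpl in *.
  pose proof (psum_nonneg i). lra.
Qed.

Lemma has_sum_nonneg l : has_sum a l -> 0 <= l.
Proof. exact (fun H => psum_le_sum l 0 H). Qed.

Lemma has_sum_eq0 i : has_sum a 0 -> a i = 0.
Proof. intros H. pose proof (term_le_sum 0 i H). specialize (a_nonneg i). lra. Qed.

End NonnegativeSeries.

Lemma has_sum_le a b la lb :
  (forall i, a i <= b i) -> has_sum a la -> has_sum b lb -> la <= lb.
Proof.
  intros H Ha Hb. assert (Hd : forall i, 0 <= b i - a i) by (intro i; specialize (H i); lra).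
  pose proof (has_sum_nonneg _ Hd _ (has_sum_minus _ _ _ _ Hb Ha)). lra.
Qed.

Lemma psum_shift a m n : psum (fun k => a (m + k)%nat) n = psum a (m + n) - psum a m.
Proof.
  induction n; simpl.
  - rewrite Nat.add_0_r. lra.
  - rewrite Nat.add_succ_r. simpl. rewrite IHn. lra.
Qed.

Lemma has_sum_shift a l m :
  has_sum a l <-> has_sum (fun k => a (m + k)%nat) (l - psum a m).
Proof.
  split; intros H eps He; destruct (H eps He) as [N HN]; unfold R_dist in *.
  - exists N. intros n Hn. rewrite psum_shift.
    replace (psum a (m + n) - psum a m - (l - psum a m)) with (psum a (m + n) - l) by ring.
    apply HN. lia.
  - exists (m + N)%nat. intros n Hn. specialize (HN (n - m)%nat ltac:(lia)).
    rewrite psum_shift in HN. replace (m + (n - m))%nat with n in HN by lia.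
    replace (psum a n - l) with (psum a n - psum a m - (l - psum a m)) by ring. auto.
Qed.

Lemma has_sum_finite a m : (forall i, (m <= i)%nat -> a i = 0) -> has_sum a (psum a m).
Proof.
  intros H eps He. exists m. intros n Hn. unfold R_dist.
  replace (psum a n) with (psum a m); [rewrite Rminus_diag, Rabs_R0; auto|].
  induction Hn; auto. simpl. rewrite H; [lra|lia].
Qed.

Lemma has_sum_shift_eq0 a k :
  (forall i, 0 <= a i) -> has_sum (fun i => a (S k + i)%nat) 0 -> forall i, (k < i)%nat -> a i = 0.
Proof.
  intros Ha H i Hi. replace i with (S k + (i - S k))%nat by lia.
  exact (has_sum_eq0 (fun j => a (S k + j)%nat) (fun j => Ha _) _ H).
Qed.

(** * Subsums *)

Definition masked (x : nat -> R) (e : nat -> bool) (i : nat) : R := if e i then x i else 0.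

Definition subsum (x : nat -> R) (e : nat -> bool) (v : R) : Prop := has_sum (masked x e) v.

Lemma represents_subsum x e v : represents x e v <-> subsum x e v.
Proof. apply infinite_sum_has_sum. Qed.

Lemma achievement_set_subsum x v : achievement_set x v <-> exists e, subsum x e v.
Proof.
  split; intros [e He]; exists e; apply represents_subsum; auto.
Qed.

Lemma subsum_unique x e v w : subsum x e v -> subsum x e w -> v = w.
Proof. apply has_sum_unique. Qed.

Definition single (n : nat) : nat -> bool := fun i => Nat.eqb i n.
Definition above (k : nat) : nat -> bool := fun i => Nat.ltb k i.
Definition setU (e f : nat -> bool) : nat -> bool := fun i => orb (e i) (f i).
Definition remove (e : nat -> bool) (n : nat) : nat -> bool :=
  fun i => if Nat.eqb i n then false else e i.
Definition disjoint (e f : nat -> bool) : Prop := forall i, e i = true -> f i = false.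
Definition supported_from (e : nat -> bool) (m : nat) : Prop :=
  forall i, (i < m)%nat -> e i = false.

Ltac bool_cases :=
  repeat (cbn [orb andb negb]; match goal with
  | |- context [Nat.eqb ?a ?b] => destruct (Nat.eqb_spec a b); try lia
  | |- context [Nat.leb ?a ?b] => destruct (Nat.leb_spec a b); try lia
  | |- context [Nat.ltb ?a ?b] => destruct (Nat.ltb_spec a b); try lia
  end); cbn [orb andb negb].

Ltac differ_at i :=
  let E := fresh in
  intro E; apply (f_equal (fun g => g i)) in E; revert E;
  cbv [setU single above remove]; bool_cases; congruence.

Lemma disjoint_single n f : f n = false -> disjoint (single n) f.
Proof. intros H i Hi. apply Nat.eqb_eq in Hi. subst. auto. Qed.

Lemma setU_single_remove e n : e n = true -> e = setU (single n) (remove e n).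
Proof.
  intro H. apply functional_extensionality. intro i. cbv [setU single remove].
  destruct (Nat.eqb_spec i n); subst; auto.
Qed.

Lemma setU_single_inj n e f :
  e n = false -> f n = false -> setU (single n) e = setU (single n) f -> e = f.
Proof.
  intros He Hf E. apply functional_extensionality. intro i.
  apply (f_equal (fun g => g i)) in E. cbv [setU single] in E.
  destruct (Nat.eqb_spec i n); [subst; congruence|auto].
Qed.

Definition tail_sum (x : nat -> R) (s : R) (m : nat) : R := s - psum x m.

Lemma tail_sum_S x s n : tail_sum x s (S n) = tail_sum x s n - x n.
Proof. unfold tail_sum. simpl. ring. Qed.

Section Subsums.

Variables (x : nat -> R) (s : R).
Hypothesis x_pos : forall i, 0 < x i.
Hypothesis x_sum : has_sum x s.

Lemma masked_nonneg e i : 0 <= masked x e i.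
Proof. unfold masked. destruct (e i); [specialize (x_pos i)|]; lra. Qed.

Lemma subsum_nonneg e v : subsum x e v -> 0 <= v.
Proof. apply has_sum_nonneg, masked_nonneg. Qed.

Lemma subsum_term_le e v i : subsum x e v -> e i = true -> x i <= v.
Proof.
  intros H Hi. pose proof (term_le_sum _ (masked_nonneg e) v i H) as Hle.
  unfold masked in Hle. rewrite Hi in Hle. auto.
Qed.

Lemma subsum_eq0 e i : subsum x e 0 -> e i = false.
Proof.
  intros H. pose proof (has_sum_eq0 _ (masked_nonneg e) i H) as E. unfold masked in E.
  destruct (e i); auto. specialize (x_pos i). lra.
Qed.

Lemma subsum_empty : subsum x (fun _ => false) 0.
Proof. exact (has_sum_finite (masked x (fun _ => false)) 0 (fun _ _ => eq_refl)). Qed.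

Lemma subsum_single n : subsum x (single n) (x n).
Proof.
  assert (Hout : forall i, i <> n -> masked x (single n) i = 0).
  { intros i Hi. unfold masked, single. destruct (Nat.eqb_spec i n); [lia|auto]. }
  replace (x n) with (psum (masked x (single n)) (S n)).
  - apply has_sum_finite. intros i Hi. apply Hout. lia.
  - simpl. rewrite psum_eq0 by (intros i Hi; apply Hout; lia).
    unfold masked, single. rewrite Nat.eqb_refl. lra.
Qed.

Lemma subsum_union e f v w :
  disjoint e f -> subsum x e v -> subsum x f w -> subsum x (setU e f) (v + w).
Proof.
  intros Hd Hv Hw. apply (has_sum_ext (fun i => masked x e i + masked x f i)).
  - intro i. unfold masked, setU. specialize (Hd i).
    destruct (e i), (f i); simpl; lra.
  - apply has_sum_plus; auto.
Qed.

Lemma subsum_diff e f v w :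
  disjoint e f -> subsum x (setU e f) v -> subsum x e w -> subsum x f (v - w).
Proof.
  intros Hd Hv Hw. apply (has_sum_ext (fun i => masked x (setU e f) i - masked x e i)).
  - intro i. unfold masked, setU. specialize (Hd i).
    destruct (e i), (f i); simpl; lra.
  - apply has_sum_minus; auto.
Qed.

Lemma subsum_remove e n v : e n = true -> subsum x e v -> subsum x (remove e n) (v - x n).
Proof.
  intros Hn Hv. rewrite (setU_single_remove e n Hn) in Hv.
  refine (subsum_diff _ _ _ _ _ Hv (subsum_single n)).
  apply disjoint_single. unfold remove. rewrite Nat.eqb_refl. auto.
Qed.

Lemma subsum_le_tail e v m : supported_from e m -> subsum x e v -> v <= tail_sum x s m.
Proof.
  intros He Hv. apply (has_sum_shift _ _ m) in Hv. apply (has_sum_shift _ _ m) in x_sum as Hs.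
  rewrite (psum_eq0 (masked x e)) in Hv by (intros i Hi; unfold masked; rewrite He; auto).
  replace v with (v - 0) by ring. refine (has_sum_le _ _ _ _ _ Hv Hs). intro i.
  unfold masked. destruct (e _); [lra|]. specialize (x_pos (m + i)%nat). lra.
Qed.

Lemma subsum_above k : subsum x (above k) (tail_sum x s (S k)).
Proof.
  assert (Hlow : psum (masked x (above k)) (S k) = 0).
  { apply psum_eq0. intros i Hi. unfold masked, above. bool_cases. auto. }
  unfold subsum. apply (has_sum_shift _ _ (S k)). rewrite Hlow, Rminus_0_r.
  refine (has_sum_ext _ _ _ _ (proj1 (has_sum_shift _ _ (S k)) x_sum)). intro i.
  unfold masked, above. bool_cases. auto.
Qed.

Lemma tail_sum_nonneg n : 0 <= tail_sum x s n.
Proof.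
  unfold tail_sum. pose proof (psum_le_sum x (fun i => Rlt_le _ _ (x_pos i)) s n x_sum). lra.
Qed.

Lemma tail_sum_small eps : 0 < eps -> exists N, forall n, (N <= n)%nat -> tail_sum x s n < eps.
Proof.
  intros He. destruct (x_sum eps He) as [N HN]. exists N. intros n Hn.
  specialize (HN n Hn). unfold R_dist in HN. apply Rabs_def2 in HN. unfold tail_sum. lra.
Qed.

Lemma terms_small eps : 0 < eps -> exists N, forall n, (N <= n)%nat -> x n < eps.
Proof.
  intros He. destruct (tail_sum_small eps He) as [N HN]. exists N. intros n Hn.
  specialize (HN n Hn). pose proof (tail_sum_nonneg (S n)). rewrite tail_sum_S in *. lra.
Qed.

Lemma subsum_supported_from e v M :
  subsum x e v -> (forall i, (i < M)%nat -> v < x i) -> supported_from e M.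
Proof.
  intros He Hv i Hi. destruct (e i) eqn:Ei; auto.
  pose proof (subsum_term_le e v i He Ei). specialize (Hv i Hi). lra.
Qed.

Lemma subsum_eq_single e n : subsum x e (x n) -> e n = true -> e = single n.
Proof.
  intros He Hn. apply (subsum_remove e n) in He; auto. rewrite Rminus_diag in He.
  apply functional_extensionality. intro i. unfold single.
  destruct (Nat.eqb_spec i n) as [->|Hin]; auto.
  pose proof (subsum_eq0 _ i He) as E. unfold remove in E.
  destruct (Nat.eqb_spec i n); [lia|auto].
Qed.

End Subsums.

(** * Kakeya's condition and the greedy algorithm *)

Fixpoint greedy_rest (x : nat -> R) (m : nat) (t : R) (k : nat) : R :=
  match k with
  | O => t
  | S k' =>
      let r := greedy_rest x m t k' in
      if Nat.leb m k' then (if Rle_dec (x k') r then r - x k' else r) else r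
  end.

Definition greedy (x : nat -> R) (m : nat) (t : R) : nat -> bool :=
  fun k => if Nat.leb m k then (if Rle_dec (x k) (greedy_rest x m t k) then true else false)
           else false.

Lemma psum_greedy x m t k : psum (masked x (greedy x m t)) k = t - greedy_rest x m t k.
Proof.
  induction k; simpl; [ring|]. rewrite IHk. unfold masked, greedy.
  destruct (Nat.leb m k); [destruct (Rle_dec (x k) (greedy_rest x m t k))|]; ring.
Qed.

Lemma greedy_supported x m t : supported_from (greedy x m t) m.
Proof. intros i Hi. unfold greedy. now bool_cases. Qed.

(* Under Kakeya's condition from [m] on, the greedy remainder after step [k] stays in
   [0, tail_sum x s k], which tends to 0. *)
Lemma greedy_subsum x s m t :
  (forall i, 0 < x i) -> has_sum x s ->
  (forall n, (m <= n)%nat -> x n <= tail_sum x s (S n)) -> 0 <= t <= tail_sum x s m ->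
  subsum x (greedy x m t) t.
Proof.
  intros Hp Hs Hk Ht.
  assert (Inv : forall k, 0 <= greedy_rest x m t k
                /\ ((m <= k)%nat -> greedy_rest x m t k <= tail_sum x s k)
                /\ ((k <= m)%nat -> greedy_rest x m t k = t)).
  { induction k as [|k IH]; simpl.
    - split; [lra|split; [|auto]]. intro H. replace m with O in Ht by lia. lra.
    - destruct IH as [I1 [I2 I3]]. destruct (Nat.leb_spec m k) as [Hmk|Hmk].
      + specialize (I2 Hmk). specialize (Hk k Hmk). rewrite tail_sum_S in Hk |- *.
        destruct (Rle_dec (x k) (greedy_rest x m t k));
          (split; [lra|split; intro; [lra|lia]]).
      + specialize (I3 ltac:(lia)). split; [lra|split; [|auto]].
        intro. replace (S k) with m by lia. lra. }
  intros eps He. destruct (tail_sum_small x s Hs eps He) as [N HN].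
  exists (Nat.max N m). intros n Hn. rewrite psum_greedy. unfold R_dist.
  destruct (Inv n) as [I1 [I2 _]]. specialize (I2 ltac:(lia)). specialize (HN n ltac:(lia)).
  rewrite Rabs_left1; lra.
Qed.

(** * Counting representations *)

Lemma has_card_ge {T : Type} (P : T -> Prop) n L :
  has_card P n -> NoDup L -> (forall e, In e L -> P e) -> (length L <= n)%nat.
Proof.
  intros [l [Hl [Hnd HP]]] HL Hin. rewrite <- Hl. apply NoDup_incl_length; auto.
  intros e He. apply HP. auto.
Qed.

Lemma has_card_le {T : Type} (P : T -> Prop) n L :
  has_card P n -> (forall e, P e -> In e L) -> (n <= length L)%nat.
Proof.
  intros [l [Hl [Hnd HP]]] Hin. rewrite <- Hl. apply NoDup_incl_length; auto.
  intros e He. apply Hin. apply HP. auto.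
Qed.

Definition card_values_in (x : nat -> R) (S : list nat) : Prop :=
  forall v, achievement_set x v ->
    exists n, In n S /\ has_card (fun e => represents x e v) n.

Section CardinalsIn124.

Variable x : nat -> R.
Hypothesis x_card : card_values_in x [1; 2; 4]%nat.

Lemma subsums_at_most_four v L :
  NoDup L -> (forall e, In e L -> subsum x e v) -> (length L <= 4)%nat.
Proof.
  intros Hnd HL. destruct L as [|e0 L]; [simpl; lia|].
  destruct (x_card v) as [n [Hn Hc]].
  { apply achievement_set_subsum. exists e0. apply HL. left. auto. }
  assert (length (e0 :: L) <= n)%nat.
  { apply (has_card_ge _ _ _ Hc Hnd). intros e He. apply represents_subsum. auto. }
  simpl in Hn. lia.
Qed.

Lemma fourth_subsum v e1 e2 e3 :
  subsum x e1 v -> subsum x e2 v -> subsum x e3 v -> e1 <> e2 -> e1 <> e3 -> e2 <> e3 ->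
  exists e, subsum x e v /\ e <> e1 /\ e <> e2 /\ e <> e3.
Proof.
  intros H1 H2 H3 N12 N13 N23. apply NNPP. intro Hno.
  destruct (x_card v) as [n [Hn Hc]]. { apply achievement_set_subsum. eauto. }
  assert (3 <= n)%nat.
  { apply (has_card_ge _ _ [e1; e2; e3] Hc).
    - repeat constructor; simpl; intuition congruence.
    - intros e He. apply represents_subsum. simpl in He. intuition (subst; auto). }
  assert (n <= 3)%nat.
  { apply (has_card_le _ _ [e1; e2; e3] Hc). intros e He. apply represents_subsum in He.
    simpl. apply NNPP. intro Hn3. apply Hno. exists e. intuition. }
  simpl in Hn. lia.
Qed.

End CardinalsIn124.

(** * Binary tails *)

Lemma last_change (f : nat -> bool) b K i0 :
  (forall i, (K < i)%nat -> f i = b) -> f i0 = negb b ->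
  exists k, (i0 <= k)%nat /\ f k = negb b /\ forall i, (k < i)%nat -> f i = b.
Proof.
  revert i0. induction K as [|K IH]; intros i0 H1 H2.
  - exists O. assert (i0 = O).
    { destruct i0; auto. rewrite H1 in H2 by lia. destruct b; discriminate. }
    subst. split; auto.
  - destruct (Bool.bool_dec (f (S K)) b) as [E|E].
    + apply IH; auto. intros i Hi. destruct (Nat.eq_dec i (S K)); [subst; auto|]. apply H1; lia.
    + exists (S K). split.
      * destruct (le_lt_dec i0 (S K)); auto. rewrite H1 in H2 by lia. destruct b; discriminate.
      * split; [destruct b, (f (S K)); simpl; congruence|auto].
Qed.

Definition binary_from (x : nat -> R) (s : R) (N : nat) : Prop :=
  forall n, (N <= n)%nat -> x n = tail_sum x s (S n).

Definition false_after (e : nat -> bool) (k : nat) : Prop := forall i, (k < i)%nat -> e i = false.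
Definition true_after (e : nat -> bool) (k : nat) : Prop := forall i, (k < i)%nat -> e i = true.

Lemma false_after_true_after e k k' : false_after e k -> true_after e k' -> False.
Proof.
  intros H1 H2. specialize (H1 (S (Nat.max k k')) ltac:(lia)).
  rewrite H2 in H1 by lia. discriminate.
Qed.

Section BinaryTail.

Variables (x : nat -> R) (s : R) (N : nat).
Hypothesis x_pos : forall i, 0 < x i.
Hypothesis x_sum : has_sum x s.
Hypothesis x_binary : binary_from x s N.

Lemma subsum_above_binary j : (N <= j)%nat -> subsum x (above j) (x j).
Proof. intros Hj. rewrite (x_binary j Hj). apply subsum_above; auto. Qed.

(* After the first index [k] at which two representations differ, the one containing [k]
   must be empty and the other full: [x k] equals the whole tail after [k]. *)
Lemma binary_first_difference e f v k :
  subsum x e v -> subsum x f v -> (N <= k)%nat -> e k = true -> f k = false ->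
  (forall i, (i < k)%nat -> e i = f i) -> false_after e k /\ true_after f k.
Proof.
  intros He Hf Hk Hek Hfk Hlow.
  assert (HP : psum (masked x e) k = psum (masked x f) k).
  { apply psum_eq. intros i Hi. unfold masked. rewrite Hlow; auto. }
  apply (has_sum_shift _ _ (S k)) in He, Hf. apply (has_sum_shift _ _ (S k)) in x_sum as Hs.
  assert (Ee : masked x e k = x k) by (unfold masked; rewrite Hek; auto).
  assert (Ef : masked x f k = 0) by (unfold masked; rewrite Hfk; auto).
  cbn [psum] in He, Hf, Hs. rewrite Ee, HP in He. rewrite Ef in Hf.
  set (P := psum (masked x f) k) in *.
  replace (s - (psum x k + x k)) with (x k) in Hs
    by (pose proof (x_binary k Hk) as E; unfold tail_sum in E; cbn [psum] in E; lra).
  assert (Le : v - (P + 0) <= x k).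
  { refine (has_sum_le _ _ _ _ _ Hf Hs). intro i. cbv beta. unfold masked.
    destruct (f (S k + i)%nat); [lra|]. specialize (x_pos (S k + i)%nat). lra. }
  pose proof (has_sum_nonneg _ (fun i => masked_nonneg x x_pos e (S k + i)) _ He).
  split.
  - intros i Hi. replace (v - (P + x k)) with 0 in He by lra.
    pose proof (has_sum_shift_eq0 _ k (masked_nonneg x x_pos e) He i Hi) as E.
    unfold masked in E. destruct (e i); auto. specialize (x_pos i). lra.
  - intros i Hi. pose proof (has_sum_minus _ _ _ _ Hs Hf) as D.
    replace (x k - (v - (P + 0))) with 0 in D by lra.
    assert (Dn : forall j, 0 <= x j - masked x f j).
    { intro j. unfold masked. specialize (x_pos j). destruct (f j); lra. }
    pose proof (has_sum_shift_eq0 _ k Dn D i Hi) as E.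
    unfold masked in E. destruct (f i); auto. specialize (x_pos i). lra.
Qed.

Lemma binary_two_subsums e f v :
  supported_from e N -> supported_from f N -> subsum x e v -> subsum x f v -> e <> f ->
  exists k, (false_after e k /\ true_after f k) \/ (true_after e k /\ false_after f k).
Proof.
  intros Se Sf He Hf Hne.
  assert (Hex : exists i, e i <> f i).
  { apply NNPP. intro Hno. apply Hne, functional_extensionality. intro i.
    apply NNPP. intro H. apply Hno. eauto. }
  destruct (dec_inh_nat_subset_has_unique_least_element (fun i => e i <> f i)
              (fun i => classic _) Hex) as [k [[Hk Hmin] _]].
  assert (Hlow : forall i, (i < k)%nat -> e i = f i).
  { intros i Hi. apply NNPP. intro H. specialize (Hmin i H). lia. }
  assert (HkN : (N <= k)%nat).
  { apply Nat.nlt_ge. intro HkN. apply Hk. rewrite Se, Sf; auto. }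
  exists k. destruct (e k) eqn:Ek.
  - left. apply (binary_first_difference e f v k); auto. destruct (f k); congruence.
  - right. apply and_comm, (binary_first_difference f e v k); auto.
    + destruct (f k); congruence.
    + intros i Hi. symmetry. auto.
Qed.

Lemma binary_at_most_two e f g v :
  supported_from e N -> supported_from f N -> supported_from g N ->
  subsum x e v -> subsum x f v -> subsum x g v -> e <> f -> e <> g -> f = g.
Proof.
  intros Se Sf Sg He Hf Hg Nef Neg. apply NNPP. intro Nfg.
  destruct (binary_two_subsums e f v) as [k1 [[Z1 O1]|[O1 Z1]]]; auto;
  destruct (binary_two_subsums e g v) as [k2 [[Z2 O2]|[O2 Z2]]]; auto;
  destruct (binary_two_subsums f g v) as [k3 [[Z3 O3]|[O3 Z3]]]; auto;
  eauto using false_after_true_after.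
Qed.

Lemma binary_exchange k Q w :
  (N <= k)%nat -> (forall i, (k <= i)%nat -> Q i = false) -> subsum x Q w ->
  subsum x (setU (single k) Q) (x k + w) /\ subsum x (setU (above k) Q) (x k + w).
Proof.
  intros Hk HQ Hw. split; apply subsum_union; auto.
  - apply disjoint_single. auto.
  - apply subsum_single.
  - intros i Hi. unfold above in Hi. apply Nat.ltb_lt in Hi. apply HQ. lia.
  - apply subsum_above_binary. auto.
Qed.

Section UniqueRepresentation.

Variables (e : nat -> bool) (t : R).
Hypothesis e_supp : supported_from e N.
Hypothesis e_sum : subsum x e t.
Hypothesis e_unique : forall f, supported_from f N -> subsum x f t -> f = e.

Let trunc (k : nat) : nat -> bool := fun i => if Nat.leb k i then false else e i.

Lemma trunc_supported k : supported_from (trunc k) N.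
Proof. intros i Hi. unfold trunc. rewrite e_supp by auto. now bool_cases. Qed.

(* Were [e] eventually [true], the block [above k] after its last zero [k] could be traded for
   [single k]; dually for [e] eventually [false]. *)
Lemma unique_rep_infinitely_false :
  (exists i0, (N <= i0)%nat /\ e i0 = false) -> forall K, exists i, (K < i)%nat /\ e i = false.
Proof.
  intros [i0 [Hi0 Ei0]] K. apply NNPP. intro Hno.
  assert (HK : forall i, (K < i)%nat -> e i = true).
  { intros i Hi. destruct (e i) eqn:E; auto. exfalso. eauto. }
  destruct (last_change e true K i0 HK Ei0) as [k [Hk [Ek Hafter]]].
  assert (Edec : e = setU (above k) (trunc k)).
  { apply functional_extensionality. intro i. unfold setU, above, trunc.
    destruct (Nat.eqb_spec i k) as [->|]; [rewrite Ek; now bool_cases|].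
    destruct (Nat.ltb_spec k i); [now rewrite Hafter|now bool_cases]. }
  assert (HQ : subsum x (trunc k) (t - x k)).
  { rewrite Edec in e_sum. rewrite (x_binary k ltac:(lia)).
    refine (subsum_diff x _ _ _ _ _ e_sum (subsum_above x s x_sum k)).
    intros i Hi. unfold above in Hi. apply Nat.ltb_lt in Hi. unfold trunc. now bool_cases. }
  destruct (binary_exchange k (trunc k) (t - x k)) as [Hsingle _]; auto; try lia.
  { intros i Hi. unfold trunc. now bool_cases. }
  replace (x k + (t - x k)) with t in Hsingle by ring.
  assert (Hs : supported_from (setU (single k) (trunc k)) N).
  { intros i Hi. unfold setU, single. rewrite trunc_supported by auto. now bool_cases. }
  pose proof (e_unique _ Hs Hsingle) as E. rewrite Edec in E. revert E.
  unfold trunc. differ_at (S k).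
Qed.

Lemma unique_rep_infinitely_true :
  (exists i0, e i0 = true) -> forall K, exists i, (K < i)%nat /\ e i = true.
Proof.
  intros [i0 Ei0] K. apply NNPP. intro Hno.
  assert (HK : forall i, (K < i)%nat -> e i = false).
  { intros i Hi. destruct (e i) eqn:E; auto. exfalso. eauto. }
  destruct (last_change e false K i0 HK Ei0) as [k [Hk [Ek Hafter]]].
  assert (HkN : (N <= k)%nat).
  { apply Nat.nlt_ge. intro Hlt. rewrite e_supp in Ek by auto. discriminate. }
  assert (Edec : e = setU (single k) (trunc k)).
  { apply functional_extensionality. intro i. unfold setU, single, trunc.
    destruct (Nat.eqb_spec i k) as [->|]; [now rewrite Ek|].
    destruct (Nat.leb_spec k i); [rewrite Hafter by lia|]; now bool_cases. }
  assert (HQ : subsum x (trunc k) (t - x k)).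
  { rewrite Edec in e_sum. refine (subsum_diff x _ _ _ _ _ e_sum (subsum_single x k)).
    apply disjoint_single. unfold trunc. now bool_cases. }
  destruct (binary_exchange k (trunc k) (t - x k)) as [_ Habove]; auto.
  { intros i Hi. unfold trunc. now bool_cases. }
  replace (x k + (t - x k)) with t in Habove by ring.
  assert (Hs : supported_from (setU (above k) (trunc k)) N).
  { intros i Hi. unfold setU, above. rewrite trunc_supported by auto. now bool_cases. }
  pose proof (e_unique _ Hs Habove) as E. rewrite Edec in E. revert E.
  unfold trunc. differ_at (S k).
Qed.

End UniqueRepresentation.

End BinaryTail.

Lemma binary_card_le_two x s v n :
  (forall i, 0 < x i) -> has_sum x s -> binary_from x s 0 ->
  has_card (fun e => represents x e v) n -> (n <= 2)%nat.
Proof.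
  intros Hp Hs Hb [l [Hl [Hnd HP]]].
  destruct l as [|e1 [|e2 [|e3 l]]]; simpl in Hl; try lia. exfalso.
  apply NoDup_cons_iff in Hnd as [N1 Hnd]. apply NoDup_cons_iff in Hnd as [N2 _].
  assert (Hr : forall e, In e (e1 :: e2 :: e3 :: l) -> subsum x e v)
    by (intros e He; apply represents_subsum, HP, He).
  assert (Z : forall e : nat -> bool, supported_from e 0) by (intros e i Hi; lia).
  apply N2. left. symmetry.
  apply (binary_at_most_two x s 0 Hp Hs Hb e1 e2 e3 v); auto; try (apply Hr; simpl; auto);
    intro E; subst; simpl in *; tauto.
Qed.

(** * Achievement sets that are intervals *)

Lemma kakeya_of_interval x s a b :
  (forall i, 0 < x i) -> has_sum x s -> Un_decreasing x ->
  (forall v, achievement_set x v <-> a <= v <= b) ->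
  forall n, x n <= tail_sum x s (S n).
Proof.
  intros Hp Hs Hd HI n. apply Rnot_lt_le. intro Hlt.
  set (w := (x n + tail_sum x s (S n)) / 2).
  assert (Ha : a <= 0) by (apply HI, achievement_set_subsum; eexists; apply subsum_empty).
  assert (Hb : s <= b) by (apply HI, achievement_set_subsum; exists (fun _ => true); exact Hs).
  pose proof (tail_sum_nonneg x s Hp Hs (S n)).
  pose proof (term_le_sum x (fun i => Rlt_le _ _ (Hp i)) s n Hs).
  assert (Hw : achievement_set x w) by (apply HI; unfold w; lra).
  apply achievement_set_subsum in Hw as [e He].
  destruct (classic (exists i, (i <= n)%nat /\ e i = true)) as [[i [Hi Hei]]|Hno].
  - pose proof (subsum_term_le x Hp e w i He Hei). pose proof (decreasing_prop x i n Hd Hi).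
    unfold w in *. lra.
  - assert (Hsupp : supported_from e (S n)).
    { intros i Hi. destruct (e i) eqn:E; auto. exfalso. apply Hno. exists i. split; [lia|auto]. }
    pose proof (subsum_le_tail x s Hp Hs e w (S n) Hsupp He). unfold w in *. lra.
Qed.

Definition slack (x : nat -> R) (s : R) (n : nat) : Prop := x n < tail_sum x s (S n).

Section InfinitelyManySlacks.

Variables (x : nat -> R) (s : R).
Hypothesis x_pos : forall i, 0 < x i.
Hypothesis x_sum : has_sum x s.
Hypothesis x_kakeya : forall n, x n <= tail_sum x s (S n).
Hypothesis x_slacks : forall M, exists n, (M <= n)%nat /\ slack x s n.

Lemma small_slack M d : 0 < d -> exists n, (M <= n)%nat /\ slack x s n /\ x n <= d.
Proof.
  intros Hd. destruct (terms_small x s x_pos x_sum d Hd) as [N0 HN0].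
  destruct (x_slacks (Nat.max M N0)) as [n [Hn Hsl]].
  exists n. split; [lia|]. split; auto. specialize (HN0 n ltac:(lia)). lra.
Qed.

(* Each slack index [n] adds a representation: [x n + v] is reached by adding [n] to every
   representation of [v] after [n], and also greedily after [n]. *)
Lemma slacks_many_subsums m : forall M d, 0 < d -> exists v L,
  v <= d /\ length L = S m /\ NoDup L /\
  forall e, In e L -> supported_from e M /\ subsum x e v.
Proof.
  induction m as [|m IH]; intros M d Hd.
  - exists 0, [fun _ => false]. split; [lra|]. split; [auto|]. split; [repeat constructor; auto|].
    intros e [<-|[]]. split; [intros i _; auto|apply subsum_empty].
  - destruct (small_slack M (d / 2) ltac:(lra)) as [n [Hn [Hsl Hxn]]].
    set (g := tail_sum x s (S n) - x n).
    assert (Hg : 0 < g) by (unfold g; unfold slack in Hsl; lra).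
    destruct (IH (S n) (Rmin g (d / 2)) (Rmin_pos g (d / 2) Hg ltac:(lra)))
      as [v [L [Hv [HL [Hnd HeL]]]]].
    pose proof (Rmin_l g (d / 2)). pose proof (Rmin_r g (d / 2)).
    assert (Hv0 : 0 <= v).
    { destruct L as [|e0 L]; [discriminate|]. destruct (HeL e0 (or_introl eq_refl)) as [_ Hv0].
      exact (subsum_nonneg x x_pos _ _ Hv0). }
    exists (x n + v), (greedy x (S n) (x n + v) :: map (setU (single n)) L).
    split; [lra|]. split; [simpl; rewrite length_map; auto|]. split.
    + constructor.
      * intro Hin. apply in_map_iff in Hin as [e [E _]].
        apply (f_equal (fun g => g n)) in E. rewrite greedy_supported in E by lia.
        cbv [setU single] in E. rewrite Nat.eqb_refl in E. discriminate.
      * apply Injective_map_NoDup_in; auto. intros e f He Hf.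
        apply setU_single_inj; [apply (proj1 (HeL e He))|apply (proj1 (HeL f Hf))]; lia.
    + intros e [<-|Hin].
      * split; [intros i Hi; apply greedy_supported; lia|].
        apply (greedy_subsum x s); auto. pose proof (x_pos n). unfold g in *. lra.
      * apply in_map_iff in Hin as [f [<- Hf]]. destruct (HeL f Hf) as [Sf Rf]. split.
        -- intros i Hi. cbv [setU single]. bool_cases. apply Sf. lia.
        -- apply subsum_union; [apply disjoint_single, Sf; lia|apply subsum_single|exact Rf].
Qed.

End InfinitelyManySlacks.

Lemma finite_gap (x : nat -> R) c n :
  (forall i, (i < n)%nat -> c < x i) -> exists d, 0 < d /\ forall i, (i < n)%nat -> c + d <= x i.
Proof.
  induction n as [|n IH]; intros H.
  - exists 1. split; [lra|]. intros; lia.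
  - destruct IH as [d [Hd Hle]]; [intros; apply H; lia|].
    exists (Rmin d (x n - c)). split.
    + apply Rmin_pos; auto. specialize (H n ltac:(lia)). lra.
    + intros i Hi. pose proof (Rmin_l d (x n - c)). pose proof (Rmin_r d (x n - c)).
      destruct (Nat.eq_dec i n) as [->|]; [lra|]. specialize (Hle i ltac:(lia)). lra.
Qed.

Section LastSlack.

Variables (x : nat -> R) (s : R) (M : nat).
Hypothesis x_pos : forall i, 0 < x i.
Hypothesis x_sum : has_sum x s.
Hypothesis x_kakeya : forall n, x n <= tail_sum x s (S n).
Hypothesis x_binary : binary_from x s (S M).
Hypothesis x_slack : slack x s M.
Hypothesis x_card : card_values_in x [1; 2; 4]%nat.

Lemma greedy_after_slack_subsum t :
  0 <= t <= tail_sum x s (S M) -> subsum x (greedy x (S M) t) t.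
Proof. intros Ht. apply (greedy_subsum x s); auto. Qed.

(* With [x M' = x M], [x M + x j] (for small [x j]) has the five representations
   {M,j}, {M',j}, {M} + above j, {M'} + above j and a greedy one after [M]. *)
Lemma slack_repeated_term_absurd M' : M = S M' -> x M' = x M -> False.
Proof.
  intros HM Heq. unfold slack in x_slack.
  destruct (terms_small x s x_pos x_sum (tail_sum x s (S M) - x M) ltac:(lra)) as [N0 HN0].
  set (j := Nat.max N0 (S M)). specialize (HN0 j ltac:(lia)). pose proof (x_pos j).
  set (v := x M + x j).
  assert (Hunion : forall p f, p = M \/ p = M' -> f p = false -> subsum x f (x j) ->
            subsum x (setU (single p) f) v).
  { intros p f [-> | ->] Hf Rf; unfold v; [|rewrite <- Heq];
      (apply subsum_union; [apply disjoint_single; auto|apply subsum_single|auto]). }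
  assert (Hsj : subsum x (single j) (x j)) by apply subsum_single.
  assert (Haj : subsum x (above j) (x j)) by (apply (subsum_above_binary x s (S M)); auto; lia).
  assert (Hg : subsum x (greedy x (S M) v) v).
  { apply greedy_after_slack_subsum. pose proof (x_pos M). unfold v. lra. }
  assert (G : greedy x (S M) v M = false /\ greedy x (S M) v M' = false)
    by (split; apply greedy_supported; lia).
  assert (H5 : (length [setU (single M) (single j); setU (single M') (single j);
                        setU (single M) (above j); setU (single M') (above j);
                        greedy x (S M) v] <= 4)%nat).
  { apply (subsums_at_most_four x x_card v).
    - (* the five sets are told apart by their values at [M], [M'] and [S j] *)
      apply (NoDup_map_inv (fun e => (e M, e M', e (S j)))). cbn [map].
      destruct G as [-> ->]. destruct (greedy x (S M) v (S j)); cbv [setU single above];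
        bool_cases; repeat constructor; simpl; intuition discriminate.
    - intros e He. simpl in He.
      destruct He as [<-|[<-|[<-|[<-|[<-|[]]]]]]; auto; apply Hunion; auto; cbv [single above];
        bool_cases. }
  simpl in H5. lia.
Qed.

(* Then [x M] has exactly the three representations {M}, [a] and [b]. *)
Lemma slack_two_tail_reps_absurd a b :
  (forall i, (i < M)%nat -> x M < x i) ->
  supported_from a (S M) -> supported_from b (S M) -> subsum x a (x M) -> subsum x b (x M) ->
  a <> b -> False.
Proof.
  intros Hbig Sa Sb Ra Rb Nab.
  assert (Na : single M <> a) by (intro E; rewrite <- E in Sa; specialize (Sa M ltac:(lia));
    unfold single in Sa; rewrite Nat.eqb_refl in Sa; discriminate).
  assert (Nb : single M <> b) by (intro E; rewrite <- E in Sb; specialize (Sb M ltac:(lia));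
    unfold single in Sb; rewrite Nat.eqb_refl in Sb; discriminate).
  destruct (fourth_subsum x x_card (x M) (single M) a b (subsum_single x M) Ra Rb Na Nb Nab)
    as [e [He [N1 [N2 N3]]]].
  pose proof (subsum_supported_from x x_pos e (x M) M He Hbig) as Se.
  destruct (e M) eqn:EM.
  - exact (N1 (subsum_eq_single x x_pos e M He EM)).
  - assert (Se' : supported_from e (S M)).
    { intros i Hi. destruct (Nat.eq_dec i M) as [->|]; auto. apply Se. lia. }
    apply Nab, (binary_at_most_two x s (S M) x_pos x_sum x_binary e a b (x M)); auto.
Qed.

Section UniqueTailRep.

Hypothesis x_big : forall i, (i < M)%nat -> x M < x i.
Hypothesis x_unique : forall a b, supported_from a (S M) -> supported_from b (S M) ->
  subsum x a (x M) -> subsum x b (x M) -> a = b.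

Let greedy_rep := greedy x (S M) (x M).

Lemma greedy_rep_supported : supported_from greedy_rep (S M).
Proof. apply greedy_supported. Qed.

Lemma greedy_rep_subsum : subsum x greedy_rep (x M).
Proof. apply greedy_after_slack_subsum. pose proof (x_pos M). unfold slack in x_slack. lra. Qed.

Lemma greedy_rep_infinitely_false K : exists i, (K < i)%nat /\ greedy_rep i = false.
Proof.
  apply (unique_rep_infinitely_false x s (S M) x_sum x_binary greedy_rep (x M)).
  - apply greedy_rep_supported.
  - apply greedy_rep_subsum.
  - intros f Sf Rf. apply x_unique; auto. apply greedy_rep_supported. apply greedy_rep_subsum.
  - apply NNPP. intro Hno. assert (E : greedy_rep = above M).
    { apply functional_extensionality. intro i. unfold above.
      destruct (Nat.ltb_spec M i); [|apply greedy_rep_supported; lia].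
      destruct (greedy_rep i) eqn:Ei; auto. exfalso. apply Hno. exists i. split; auto. }
    pose proof greedy_rep_subsum as H. rewrite E in H.
    pose proof (subsum_unique _ _ _ _ H (subsum_above x s x_sum M)). unfold slack in x_slack. lra.
Qed.

Lemma greedy_rep_infinitely_true K : exists i, (K < i)%nat /\ greedy_rep i = true.
Proof.
  apply (unique_rep_infinitely_true x s (S M) x_sum x_binary greedy_rep (x M)).
  - apply greedy_rep_supported.
  - apply greedy_rep_subsum.
  - intros f Sf Rf. apply x_unique; auto. apply greedy_rep_supported. apply greedy_rep_subsum.
  - apply NNPP. intro Hno. pose proof (x_pos M) as HM.
    assert (E : greedy_rep = fun _ => false).
    { apply functional_extensionality. intro i.
      destruct (greedy_rep i) eqn:Ei; auto. exfalso. eauto. }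
    pose proof greedy_rep_subsum as H. rewrite E in H.
    pose proof (subsum_unique _ _ _ _ H (subsum_empty x)). lra.
Qed.

(* [x M + x j] has the three representations {M, j}, {M} + above j and greedy_rep + {j}; a
   fourth one avoiding [M] would differ from greedy_rep + {j} by an eventually constant tail. *)
Lemma slack_unique_tail_rep_absurd : False.
Proof.
  destruct (finite_gap x (x M) M x_big) as [d [Hd Hgap]].
  destruct (terms_small x s x_pos x_sum d Hd) as [N0 HN0].
  destruct (greedy_rep_infinitely_false (Nat.max N0 (S M))) as [j [Hj Rj]].
  specialize (HN0 j ltac:(lia)). pose proof (x_pos j). set (v := x M + x j).
  assert (Hrep_M : greedy_rep M = false) by (apply greedy_rep_supported; lia).
  assert (Hunion : forall f, f M = false -> subsum x f (x j) -> subsum x (setU (single M) f) v)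
    by (intros f Hf Rf; apply subsum_union; [apply disjoint_single; auto|apply subsum_single|auto]).
  assert (R3 : subsum x (setU (single j) greedy_rep) v).
  { unfold v. rewrite Rplus_comm.
    apply subsum_union; [apply disjoint_single; auto|apply subsum_single|apply greedy_rep_subsum]. }
  assert (S3 : supported_from (setU (single j) greedy_rep) (S M)).
  { intros i Hi. unfold setU, single. rewrite greedy_rep_supported by auto. now bool_cases. }
  assert (N13 : setU (single M) (single j) <> setU (single j) greedy_rep).
  { intro E. apply (f_equal (fun g => g M)) in E. revert E. cbv [setU single].
    rewrite Hrep_M. now bool_cases. }
  assert (N23 : setU (single M) (above j) <> setU (single j) greedy_rep).
  { intro E. apply (f_equal (fun g => g M)) in E. revert E. cbv [setU single above].
    rewrite Hrep_M. now bool_cases. }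
  destruct (fourth_subsum x x_card v _ _ _
              (Hunion (single j) ltac:(unfold single; now bool_cases) (subsum_single x j))
              (Hunion (above j) ltac:(unfold above; now bool_cases)
                 (subsum_above_binary x s (S M) x_sum x_binary j ltac:(lia))) R3)
    as [e [He [N1 [N2 N3]]]]; [differ_at (S j)|auto|auto|].
  assert (Se : supported_from e M).
  { apply (subsum_supported_from x x_pos e v M He).
    intros i Hi. specialize (Hgap i Hi). unfold v. lra. }
  destruct (e M) eqn:EM.
  - pose proof (subsum_remove x e M v EM He) as He'.
    replace (v - x M) with (x j) in He' by (unfold v; ring).
    assert (Se' : supported_from (remove e M) (S M)).
    { intros i Hi. unfold remove. destruct (Nat.eqb_spec i M); auto. apply Se. lia. }
    rewrite (setU_single_remove e M EM) in N1, N2.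
    assert (Sj : supported_from (single j) (S M)) by (intros i Hi; unfold single; now bool_cases).
    assert (Aj : supported_from (above j) (S M)) by (intros i Hi; unfold above; now bool_cases).
    assert (Ej : single j = above j).
    { apply (binary_at_most_two x s (S M) x_pos x_sum x_binary (remove e M) _ _ (x j)); auto.
      - apply subsum_single.
      - apply (subsum_above_binary x s (S M)); auto. lia.
      - intro E. apply N1. rewrite E. auto.
      - intro E. apply N2. rewrite E. auto. }
    revert Ej. differ_at (S j).
  - assert (Se' : supported_from e (S M)).
    { intros i Hi. destruct (Nat.eq_dec i M) as [->|]; auto. apply Se. lia. }
    destruct (binary_two_subsums x s (S M) x_pos x_sum x_binary e _ v Se' S3 He R3 N3)
      as [k [[_ O3]|[_ Z3]]].
    + destruct (greedy_rep_infinitely_false (Nat.max k j)) as [i [Hi Ri]].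
      specialize (O3 i ltac:(lia)). revert O3. unfold setU, single. rewrite Ri. now bool_cases.
    + destruct (greedy_rep_infinitely_true k) as [i [Hi Ri]].
      specialize (Z3 i Hi). revert Z3. unfold setU, single. rewrite Ri. now bool_cases.
Qed.

End UniqueTailRep.

End LastSlack.

Lemma decreasing_interval_card_absurd x s a b v :
  (forall i, 0 < x i) -> has_sum x s -> Un_decreasing x ->
  (forall w, achievement_set x w <-> a <= w <= b) -> card_values_in x [1; 2; 4]%nat ->
  has_card (fun e => represents x e v) 4 -> False.
Proof.
  intros Hp Hs Hd HI Hc H4.
  pose proof (kakeya_of_interval x s a b Hp Hs Hd HI) as Hk.
  destruct (classic (forall M, exists n, (M <= n)%nat /\ slack x s n)) as [Hinf|Hfin].
  { destruct (slacks_many_subsums x s Hp Hs Hk Hinf 4 0 1 ltac:(lra))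
      as [w [L [_ [HL [Hnd HeL]]]]].
    pose proof (subsums_at_most_four x Hc w L Hnd (fun e He => proj2 (HeL e He))). lia. }
  assert (Hbin : exists N, binary_from x s N).
  { apply not_all_ex_not in Hfin as [M0 HM0]. exists M0. intros n Hn.
    destruct (Rle_lt_or_eq_dec _ _ (Hk n)) as [Hlt|]; auto. exfalso. apply HM0. eauto. }
  destruct (dec_inh_nat_subset_has_unique_least_element _ (fun N => classic _) Hbin)
    as [[|M] [[HN Hmin] _]].
  { pose proof (binary_card_le_two x s v 4 Hp Hs HN H4). lia. }
  assert (Hsl : slack x s M).
  { destruct (Rle_lt_or_eq_dec _ _ (Hk M)) as [|E]; auto. exfalso.
    assert (HM : binary_from x s M).
    { intros n Hn. destruct (Nat.eq_dec n M) as [->|]; auto. apply HN. lia. }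
    specialize (Hmin M HM). lia. }
  destruct (classic (exists M', M = S M' /\ x M' = x M)) as [[M' [HM Heq]]|Hrep].
  { exact (slack_repeated_term_absurd x s M Hp Hs Hk HN Hsl Hc M' HM Heq). }
  assert (Hbig : forall i, (i < M)%nat -> x M < x i).
  { intros i Hi. destruct M as [|M']; [lia|].
    pose proof (decreasing_prop x i M' Hd ltac:(lia)). pose proof (Hd M').
    destruct (Req_dec (x M') (x (S M'))); [exfalso; eauto|lra]. }
  destruct (classic (exists e f, supported_from e (S M) /\ supported_from f (S M) /\
                       subsum x e (x M) /\ subsum x f (x M) /\ e <> f))
    as [[e [f [Se [Sf [Re [Rf Nef]]]]]]|Huniq].
  - exact (slack_two_tail_reps_absurd x s M Hp Hs HN Hc e f Hbig Se Sf Re Rf Nef).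
  - apply (slack_unique_tail_rep_absurd x s M Hp Hs Hk HN Hsl Hc Hbig).
    intros e f Se Sf Re Rf. apply NNPP. intro Nef. apply Huniq. exists e, f. auto.
Qed.

(** * Decreasing rearrangement *)

Definition lsum (a : nat -> R) (L : list nat) : R := fold_right (fun i acc => a i + acc) 0 L.

Lemma lsum_app a L1 L2 : lsum a (L1 ++ L2) = lsum a L1 + lsum a L2.
Proof. induction L1; simpl; [ring|]. rewrite IHL1. ring. Qed.

Lemma lsum_map a f L : lsum a (map f L) = lsum (fun k => a (f k)) L.
Proof. induction L; simpl; auto. rewrite IHL. auto. Qed.

Lemma psum_lsum a n : psum a n = lsum a (seq 0 n).
Proof. induction n; auto. rewrite seq_S, lsum_app, <- IHn. simpl. ring. Qed.

Lemma lsum_incl a L' : (forall i, 0 <= a i) ->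
  forall L, NoDup L -> incl L L' -> lsum a L <= lsum a L'.
Proof.
  intro Ha. induction L' as [|z L' IH]; intros L Hnd Hinc.
  - destruct L as [|w L]; [simpl; lra|]. destruct (Hinc w (or_introl eq_refl)).
  - simpl. specialize (Ha z) as Hz0. destruct (in_dec Nat.eq_dec z L) as [Hz|Hz].
    + apply in_split in Hz as [L1 [L2 ->]].
      assert (H : lsum a (L1 ++ L2) <= lsum a L').
      { apply IH; [exact (NoDup_remove_1 _ _ _ Hnd)|]. intros w Hw.
        assert (Hw' : In w (z :: L'))
          by (apply Hinc, in_or_app; apply in_app_or in Hw; simpl; tauto).
        destruct Hw' as [<-|]; [exfalso; exact (NoDup_remove_2 _ _ _ Hnd Hw)|auto]. }
      rewrite lsum_app in *. simpl. lra.
    + assert (lsum a L <= lsum a L').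
      { apply IH; auto. intros w Hw. destruct (Hinc w Hw) as [<-|]; [contradiction|auto]. }
      lra.
Qed.

Lemma psum_reindex_le a f n : (forall i, 0 <= a i) -> (forall i j, f i = f j -> i = j) ->
  exists K, psum (fun k => a (f k)) n <= psum a K.
Proof.
  intros Ha Hf. set (L := map f (seq 0 n)). exists (S (list_max L)).
  rewrite !psum_lsum, <- lsum_map. apply lsum_incl; auto.
  - apply Injective_map_NoDup; [intros i j; apply Hf|apply seq_NoDup].
  - intros i Hi. apply in_seq. assert (i <= list_max L)%nat; [|lia].
    exact (proj1 (Forall_forall _ _) (proj1 (list_max_le L _) (le_n _)) i Hi).
Qed.

Lemma has_sum_of_bounded a l : (forall i, 0 <= a i) -> (forall n, psum a n <= l) ->
  exists l', has_sum a l' /\ l' <= l.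
Proof.
  intros Ha Hb. assert (Hg : Un_growing (psum a)) by (intro n; simpl; specialize (Ha n); lra).
  destruct (growing_cv _ Hg) as [l' Hl']; [exists l; intros z [n ->]; auto|].
  exists l'. split; auto. apply (@Rle_cv_lim _ (fun _ => l) _ _ Hb Hl').
  intros eps He. exists O. intros. unfold R_dist. rewrite Rminus_diag, Rabs_R0. auto.
Qed.

Lemma has_sum_reindex a f g l : (forall i, 0 <= a i) ->
  (forall i, f (g i) = i) -> (forall k, g (f k) = k) ->
  has_sum a l -> has_sum (fun k => a (f k)) l.
Proof.
  intros Ha Hfg Hgf Hs.
  assert (Hfi : forall i j, f i = f j -> i = j)
    by (intros i j E; rewrite <- (Hgf i), <- (Hgf j), E; auto).
  assert (Hgi : forall i j, g i = g j -> i = j)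
    by (intros i j E; rewrite <- (Hfg i), <- (Hfg j), E; auto).
  destruct (has_sum_of_bounded (fun k => a (f k)) l (fun k => Ha (f k))) as [l' [Hl' Hle]].
  { intro n. destruct (psum_reindex_le a f n Ha Hfi) as [K HK].
    pose proof (psum_le_sum a Ha l K Hs). lra. }
  destruct (has_sum_of_bounded a l' Ha) as [l'' [Hl'' Hge]].
  { intro n. destruct (psum_reindex_le (fun k => a (f k)) g n (fun k => Ha (f k)) Hgi) as [K HK].
    rewrite (psum_eq _ a n) in HK by (intros i _; rewrite Hfg; auto).
    pose proof (psum_le_sum _ (fun k => Ha (f k)) l' K Hl'). lra. }
  pose proof (has_sum_unique _ _ _ Hs Hl''). replace l with l' by lra. auto.
Qed.

Section DecreasingRearrangement.

Variables (x : nat -> R) (s : R).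
Hypothesis x_pos : forall i, 0 < x i.
Hypothesis x_sum : has_sum x s.

Definition precedes (i j : nat) : Prop := x j < x i \/ (x i = x j /\ (i < j)%nat).

Lemma precedes_trans i j k : precedes i j -> precedes j k -> precedes i k.
Proof.
  unfold precedes. intros [H1|[H1 H1']] [H2|[H2 H2']]; try (left; lra). right. split; [lra|lia].
Qed.

Lemma precedes_irrefl i : ~ precedes i i.
Proof. unfold precedes. intros [H|[_ H]]; [lra|lia]. Qed.

Lemma precedes_total i j : i <> j -> precedes i j \/ precedes j i.
Proof.
  unfold precedes. intros Hne. destruct (Rtotal_order (x i) (x j)) as [H|[H|H]]; [lra| |lra].
  destruct (Nat.lt_total i j) as [Hij|[Hij|Hij]];
    [left; right; split; [lra|lia] | lia | right; right; split; [lra|lia]].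
Qed.

Lemma predecessors_finite j : exists L, NoDup L /\ forall i, In i L <-> precedes i j.
Proof.
  destruct (terms_small x s x_pos x_sum (x j) (x_pos j)) as [B HB].
  exists (filter (fun i => if excluded_middle_informative (precedes i j) then true else false)
            (seq 0 B)).
  split; [apply NoDup_filter, seq_NoDup|]. intro i. rewrite filter_In, in_seq.
  destruct (excluded_middle_informative (precedes i j)) as [H|H]; [|intuition discriminate].
  repeat split; auto; [lia|]. apply Nat.nle_gt. intro HBi. specialize (HB i HBi).
  destruct H as [H|[H _]]; lra.
Qed.

Definition predecessors (j : nat) : list nat :=
  proj1_sig (constructive_indefinite_description _ (predecessors_finite j)).

Definition rank (j : nat) : nat := length (predecessors j).

Lemma predecessors_spec j :
  NoDup (predecessors j) /\ forall i, In i (predecessors j) <-> precedes i j.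
Proof. unfold predecessors. destruct constructive_indefinite_description. auto. Qed.

Lemma rank_lt i j : precedes i j -> (rank i < rank j)%nat.
Proof.
  intros H. destruct (predecessors_spec i) as [Hi Pi], (predecessors_spec j) as [Hj Pj].
  change (length (i :: predecessors i) <= rank j)%nat. apply NoDup_incl_length.
  - constructor; auto. rewrite Pi. apply precedes_irrefl.
  - intros w [<-|Hw]; apply Pj; auto. apply (precedes_trans _ i); auto. apply Pi. auto.
Qed.

Lemma rank_inj i j : rank i = rank j -> i = j.
Proof.
  intros E. destruct (Nat.eq_dec i j); auto.
  destruct (precedes_total i j) as [H|H]; auto; apply rank_lt in H; lia.
Qed.

Lemma rank_surj k : exists j, rank j = k.
Proof.
  assert (Hex : exists j, (k <= rank j)%nat).
  { apply NNPP. intro Hno.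
    assert (Hlen : (length (map rank (seq 0 (S k))) <= length (seq 0 k))%nat).
    { apply NoDup_incl_length.
      - apply Injective_map_NoDup; [intros a b; apply rank_inj|apply seq_NoDup].
      - intros w Hw. apply in_map_iff in Hw as [j [<- _]]. apply in_seq.
        destruct (Nat.le_gt_cases k (rank j)); [exfalso; eauto|lia]. }
    rewrite length_map, !length_seq in Hlen. lia. }
  destruct Hex as [j Hj]. destruct (Nat.eq_dec (rank j) k) as [E|E]; [eauto|].
  destruct (predecessors_spec j) as [Hnd Pj].
  assert (Hinc : incl (seq 0 (rank j)) (map rank (predecessors j))).
  { apply NoDup_length_incl.
    - apply Injective_map_NoDup; [intros a b; apply rank_inj|auto].
    - rewrite length_map, length_seq. auto.
    - intros w Hw. apply in_map_iff in Hw as [i [<- Hi]]. apply in_seq.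
      apply Pj, rank_lt in Hi. lia. }
  destruct (proj1 (in_map_iff _ _ _) (Hinc k ltac:(apply in_seq; lia))) as [i [Ei _]]. eauto.
Qed.

Lemma decreasing_rearrangement :
  exists sg rk : nat -> nat,
    (forall i, sg (rk i) = i) /\ (forall k, rk (sg k) = k) /\ Un_decreasing (fun k => x (sg k)).
Proof.
  set (sg k := proj1_sig (constructive_indefinite_description _ (rank_surj k))).
  assert (Hsg : forall k, rank (sg k) = k).
  { intro k. unfold sg. destruct constructive_indefinite_description. auto. }
  exists sg, rank. split; [intro i; apply rank_inj, Hsg|]. split; auto.
  intro k. assert (H : precedes (sg k) (sg (S k))).
  { destruct (Nat.eq_dec (sg k) (sg (S k))) as [E|Hne].
    - apply (f_equal rank) in E. rewrite !Hsg in E. lia.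
    - destruct (precedes_total _ _ Hne) as [|H]; auto. apply rank_lt in H. rewrite !Hsg in H. lia. }
  destruct H as [H|[H _]]; lra.
Qed.

End DecreasingRearrangement.

Section Reindexing.

Variables (x : nat -> R) (sg rk : nat -> nat).
Hypothesis x_pos : forall i, 0 < x i.
Hypothesis sg_rk : forall i, sg (rk i) = i.
Hypothesis rk_sg : forall k, rk (sg k) = k.

Lemma subsum_reindex e v : subsum x e v <-> subsum (fun k => x (sg k)) (fun k => e (sg k)) v.
Proof.
  split; intro H.
  - exact (has_sum_reindex _ sg rk v (masked_nonneg x x_pos e) sg_rk rk_sg H).
  - refine (has_sum_ext _ _ _ _ (has_sum_reindex _ rk sg v _ rk_sg sg_rk H)).
    + intro i. unfold masked. rewrite sg_rk. auto.
    + intro i. apply masked_nonneg. auto.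
Qed.

Lemma achievement_set_reindex v : achievement_set (fun k => x (sg k)) v <-> achievement_set x v.
Proof.
  rewrite !achievement_set_subsum. split; intros [e He].
  - exists (fun i => e (rk i)). apply subsum_reindex.
    refine (has_sum_ext _ _ _ _ He). intro k. unfold masked. rewrite rk_sg. auto.
  - exists (fun k => e (sg k)). apply subsum_reindex. auto.
Qed.

Lemma has_card_reindex v n :
  has_card (fun e => represents x e v) n ->
  has_card (fun e => represents (fun k => x (sg k)) e v) n.
Proof.
  intros [l [Hl [Hnd HP]]]. exists (map (fun e k => e (sg k)) l).
  split; [rewrite length_map; auto|]. split.
  - apply Injective_map_NoDup; auto. intros e f E. apply functional_extensionality. intro i.
    rewrite <- (sg_rk i). exact (f_equal (fun g => g (rk i)) E).
  - intro e. rewrite represents_subsum, in_map_iff. split.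
    + intros He. exists (fun i => e (rk i)). split.
      * apply functional_extensionality. intro k. rewrite rk_sg. auto.
      * apply HP, represents_subsum, subsum_reindex.
        refine (has_sum_ext _ _ _ _ He). intro k. unfold masked. rewrite rk_sg. auto.
    + intros [f [<- Hf]]. apply subsum_reindex, represents_subsum, HP. auto.
Qed.

End Reindexing.

Lemma not_in_I1_124 : ~ in_I1 [1; 2; 4]%nat.
Proof.
  intros [x [[Hpos [s Hs]] [[a [b [_ HI]]] [Hcard H4]]]]. apply infinite_sum_has_sum in Hs.
  destruct (decreasing_rearrangement x s Hpos Hs) as [sg [rk [Hsr [Hrs Hd]]]].
  destruct (H4 4%nat ltac:(simpl; auto)) as [v [_ Hv]].
  apply (decreasing_interval_card_absurd (fun k => x (sg k)) s a b v); auto.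
  - exact (has_sum_reindex x sg rk s (fun i => Rlt_le _ _ (Hpos i)) Hsr Hrs Hs).
  - intro w. rewrite (achievement_set_reindex x sg rk); auto.
  - intros w Hw. rewrite (achievement_set_reindex x sg rk) in Hw by auto.
    destruct (Hcard w Hw) as [n [Hn Hc]]. exists n. split; auto.
    apply (has_card_reindex x sg rk); auto.
  - apply (has_card_reindex x sg rk); auto.
Qed.

(** * The sequence 3, 3, 1, 1/2, 1/4, ... *)

Definition seq124 (n : nat) : R :=
  match n with O | S O => 3 | S (S k) => (1 / 2) ^ k end.

Lemma seq124_pos n : 0 < seq124 n.
Proof. destruct n as [|[|k]]; simpl; try lra. apply pow_lt. lra. Qed.

Lemma psum_seq124 n : psum seq124 (S (S n)) = 8 - 2 * (1 / 2) ^ n.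
Proof. induction n; [simpl; lra|]. change (psum seq124 (S (S (S n)))) with
  (psum seq124 (S (S n)) + seq124 (S (S n))). rewrite IHn. simpl. lra. Qed.

Lemma seq124_sum : has_sum seq124 8.
Proof.
  intros eps He.
  destruct (pow_lt_1_zero (1 / 2) ltac:(rewrite Rabs_right; lra) (eps / 2) ltac:(lra)) as [N HN].
  exists (S (S N)). intros n Hn. destruct n as [|[|n]]; try lia. rewrite psum_seq124. unfold R_dist.
  specialize (HN n ltac:(lia)). rewrite Rabs_right in HN by (apply Rle_ge, pow_le; lra).
  pose proof (pow_le (1 / 2) n ltac:(lra)). rewrite Rabs_left1; lra.
Qed.

Lemma tail_seq124 n : tail_sum seq124 8 (S (S n)) = 2 * (1 / 2) ^ n.
Proof. unfold tail_sum. rewrite psum_seq124. ring. Qed.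

Lemma seq124_binary : binary_from seq124 8 2.
Proof.
  intros [|[|k]] Hk; try lia. change (S (S (S k))) with (S (S (S k))).
  rewrite tail_seq124. simpl. field.
Qed.

Definition tail_rep (t : R) (f : nat -> bool) : Prop := supported_from f 2 /\ subsum seq124 f t.

Lemma tail_rep_range t f : tail_rep t f -> 0 <= t <= 2.
Proof.
  intros [Hf Ht]. split; [exact (subsum_nonneg _ seq124_pos _ _ Ht)|].
  replace 2 with (tail_sum seq124 8 2) by (unfold tail_sum; simpl; lra).
  exact (subsum_le_tail _ _ seq124_pos seq124_sum _ _ _ Hf Ht).
Qed.

Lemma tail_rep_exists t : 0 <= t <= 2 -> tail_rep t (greedy seq124 2 t).
Proof.
  intros Ht. split; [apply greedy_supported|].
  apply (greedy_subsum _ 8); auto using seq124_pos, seq124_sum.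
  - intros n Hn. rewrite (seq124_binary n Hn). lra.
  - unfold tail_sum. simpl. lra.
Qed.

Lemma tail_reps_listed t : (exists f, tail_rep t f) ->
  exists L, (length L = 1 \/ length L = 2)%nat /\ NoDup L /\ forall f, tail_rep t f <-> In f L.
Proof.
  intros [f Hf].
  destruct (classic (exists f1 f2, tail_rep t f1 /\ tail_rep t f2 /\ f1 <> f2))
    as [[f1 [f2 [[S1 R1] [[S2 R2] N12]]]]|Hno].
  - exists [f1; f2]. split; [auto|]. split; [repeat constructor; simpl; intuition congruence|].
    intro g. simpl. split; [|intros [<-|[<-|[]]]; split; auto].
    intros [Sg Rg]. destruct (classic (f1 = g)) as [|N1]; [auto|right; left]. symmetry.
    exact (binary_at_most_two _ _ _ seq124_pos seq124_sum seq124_binary f1 g f2 t S1 Sg S2 R1 Rg R2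
      N1 N12).
  - exists [f]. split; [auto|]. split; [repeat constructor; simpl; tauto|].
    intro g. simpl. split; [|intros [<-|[]]; auto].
    intro Hg. left. apply NNPP. intro Ne. apply Hno. exists f, g. auto.
Qed.

Definition head_set (b0 b1 : bool) : nat -> bool :=
  fun i => match i with O => b0 | S O => b1 | _ => false end.

Definition head_value (b0 b1 : bool) : R := (if b0 then 3 else 0) + (if b1 then 3 else 0).

Definition drop_head (e : nat -> bool) : nat -> bool :=
  fun i => match i with O | S O => false | _ => e i end.

Lemma setU_head_drop e : e = setU (head_set (e O) (e 1%nat)) (drop_head e).
Proof.
  apply functional_extensionality. intros [|[|i]]; unfold setU, head_set, drop_head; simpl;
    destruct (e _); auto.
Qed.

Lemma setU_head_inj b0 b1 c0 c1 f g : supported_from f 2 -> supported_from g 2 ->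
  setU (head_set b0 b1) f = setU (head_set c0 c1) g -> b0 = c0 /\ b1 = c1 /\ f = g.
Proof.
  intros Hf Hg E.
  pose proof (f_equal (fun h => h O) E) as E0. pose proof (f_equal (fun h => h 1%nat) E) as E1.
  cbv beta in E0, E1. unfold setU, head_set in E0, E1. rewrite Hf, Hg in E0, E1 by lia.
  rewrite !Bool.orb_false_r in E0, E1. repeat split; auto.
  apply functional_extensionality. intros [|[|i]]; [rewrite Hf, Hg by lia; auto..|].
  exact (f_equal (fun h => h (S (S i))) E).
Qed.

Lemma subsum_head_set b0 b1 : subsum seq124 (head_set b0 b1) (head_value b0 b1).
Proof.
  replace (head_value b0 b1) with (psum (masked seq124 (head_set b0 b1)) 2)
    by (unfold masked, head_value, head_set; simpl; destruct b0, b1; ring).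
  apply has_sum_finite. intros [|[|i]] Hi; [lia..|auto].
Qed.

Lemma disjoint_head_set b0 b1 f : supported_from f 2 -> disjoint (head_set b0 b1) f.
Proof. intros Hf [|[|i]] Hi; [apply Hf; lia..|discriminate]. Qed.

Lemma subsum_setU_head b0 b1 f t :
  tail_rep t f -> subsum seq124 (setU (head_set b0 b1) f) (head_value b0 b1 + t).
Proof.
  intros [Hf Ht]. apply subsum_union; auto using disjoint_head_set, subsum_head_set.
Qed.

Lemma tail_rep_drop_head e v :
  subsum seq124 e v -> tail_rep (v - head_value (e O) (e 1%nat)) (drop_head e).
Proof.
  intros He. assert (Hd : supported_from (drop_head e) 2) by (intros [|[|i]] Hi; auto; lia).
  split; auto. rewrite (setU_head_drop e) in He.
  exact (subsum_diff _ _ _ _ _ (disjoint_head_set _ _ _ Hd) He (subsum_head_set _ _)).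
Qed.

Lemma head_value_separated a b c d v :
  0 <= v - head_value a b <= 2 -> 0 <= v - head_value c d <= 2 -> head_value a b = head_value c d.
Proof. unfold head_value. destruct a, b, c, d; intros; lra. Qed.

Definition head_pairs (b0 b1 : bool) : list (bool * bool) :=
  if xorb b0 b1 then [(true, false); (false, true)] else [(b0, b1)].

Lemma head_pairs_spec b0 b1 c0 c1 :
  In (c0, c1) (head_pairs b0 b1) <-> head_value c0 c1 = head_value b0 b1.
Proof.
  unfold head_pairs, head_value.
  destruct b0, b1, c0, c1; simpl; split; intro H; try lra; intuition congruence.
Qed.

Lemma head_pairs_NoDup b0 b1 : NoDup (head_pairs b0 b1).
Proof.
  unfold head_pairs. destruct b0, b1; simpl; repeat constructor; simpl; intuition congruence.
Qed.

Lemma NoDup_list_prod {A B : Type} (l1 : list A) (l2 : list B) :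
  NoDup l1 -> NoDup l2 -> NoDup (list_prod l1 l2).
Proof.
  intros H1 H2. induction H1 as [|a l1 Ha Hl1 IH]; simpl; [constructor|].
  apply NoDup_app; auto.
  - apply Injective_map_NoDup; auto. intros u w E. inversion E. auto.
  - intros [p q] Hin Hin2. apply in_map_iff in Hin as [z [E _]]. inversion E; subst.
    apply in_prod_iff in Hin2. tauto.
Qed.

(* A representation of [v] is a head pair with the right head value joined to a tail
   representation of the rest. *)
Lemma has_card_seq124 v b0 b1 L : NoDup L -> L <> [] ->
  (forall f, tail_rep (v - head_value b0 b1) f <-> In f L) ->
  has_card (fun e => represents seq124 e v) (length (head_pairs b0 b1) * length L).
Proof.
  intros Hnd Hne HL.
  set (join (p : (bool * bool) * (nat -> bool)) :=
         setU (head_set (fst (fst p)) (snd (fst p))) (snd p)).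
  exists (map join (list_prod (head_pairs b0 b1) L)).
  split; [rewrite length_map, length_prod; auto|]. split.
  - apply Injective_map_NoDup_in; [|apply NoDup_list_prod; auto using head_pairs_NoDup].
    intros [[p0 p1] f] [[q0 q1] g] Hp Hq E. apply in_prod_iff in Hp as [_ Hp], Hq as [_ Hq].
    apply HL in Hp as [Sf _], Hq as [Sg _]. cbv [join fst snd] in E.
    destruct (setU_head_inj _ _ _ _ _ _ Sf Sg E) as [-> [-> ->]]. auto.
  - destruct L as [|f0 L0]; [congruence|].
    assert (Hr : 0 <= v - head_value b0 b1 <= 2) by (apply (tail_rep_range _ f0), HL; left; auto).
    intro e. rewrite represents_subsum, in_map_iff. split.
    + intro He. exists ((e O, e 1%nat), drop_head e). split; [symmetry; apply (setU_head_drop e)|].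
      pose proof (tail_rep_drop_head e v He) as Ht.
      pose proof (head_value_separated _ _ _ _ v (tail_rep_range _ _ Ht) Hr) as Eh.
      apply in_prod_iff. split; [apply head_pairs_spec; auto|]. apply HL. rewrite <- Eh. auto.
    + intros [[[c0 c1] f] [<- Hin]]. apply in_prod_iff in Hin as [Hp Hf].
      apply head_pairs_spec in Hp. apply HL in Hf.
      replace v with (head_value c0 c1 + (v - head_value b0 b1)) by lra.
      apply subsum_setU_head. auto.
Qed.

Lemma seq124_card_at b0 b1 t L : NoDup L -> L <> [] -> (forall f, tail_rep t f <-> In f L) ->
  achievement_set seq124 (head_value b0 b1 + t) /\
  has_card (fun e => represents seq124 e (head_value b0 b1 + t))
    (length (head_pairs b0 b1) * length L).
Proof.
  intros Hnd Hne HL. split.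
  - destruct L as [|f L]; [congruence|]. apply achievement_set_subsum.
    exists (setU (head_set b0 b1) f). apply subsum_setU_head, HL. left. auto.
  - apply has_card_seq124; auto. intro f. replace (head_value b0 b1 + t - head_value b0 b1) with t
      by ring. auto.
Qed.

Lemma tail_reps_0 f : tail_rep 0 f <-> In f [fun _ => false].
Proof.
  split.
  - intros [_ Hf]. left. apply functional_extensionality. intro i. symmetry.
    exact (subsum_eq0 _ seq124_pos _ i Hf).
  - intros [<-|[]]. split; [intros i _; auto|apply subsum_empty].
Qed.

Lemma tail_reps_1 f : tail_rep 1 f <-> In f [single 2; above 2].
Proof.
  assert (Hs : tail_rep 1 (single 2)).
  { split; [intros i Hi; unfold single; now bool_cases|].
    replace 1 with (seq124 2) by (simpl; ring). apply subsum_single. }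
  assert (Ha : tail_rep 1 (above 2)).
  { split; [intros i Hi; unfold above; now bool_cases|].
    replace 1 with (seq124 2) by (simpl; ring). apply (subsum_above_binary _ 8 2); auto.
    - apply seq124_sum.
    - apply seq124_binary. }
  split.
  - intros Hf. simpl. destruct (classic (single 2 = f)) as [|N1]; [auto|right; left]. symmetry.
    destruct Hs as [Ss Rs], Ha as [Sa Ra], Hf as [Sf Rf].
    apply (binary_at_most_two _ _ _ seq124_pos seq124_sum seq124_binary (single 2) f (above 2) 1);
      auto. differ_at 3%nat.
  - intros [<-|[<-|[]]]; auto.
Qed.

Lemma achievement_set_seq124 v :
  achievement_set seq124 v <-> exists p, In p [(0, 2); (3, 5); (6, 8)] /\ fst p <= v <= snd p.
Proof.
  rewrite achievement_set_subsum. split.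
  - intros [e He]. pose proof (tail_rep_range _ _ (tail_rep_drop_head e v He)) as Hr.
    unfold head_value in Hr. destruct (e O), (e 1%nat);
      [exists (6, 8)|exists (3, 5)|exists (3, 5)|exists (0, 2)]; simpl; split; auto; lra.
  - intros [p [Hp Hv]].
    assert (Hh : exists b0 b1, 0 <= v - head_value b0 b1 <= 2).
    { unfold head_value. destruct Hp as [<-|[<-|[<-|[]]]]; simpl in Hv;
        [exists false, false|exists true, false|exists true, true]; lra. }
    destruct Hh as [b0 [b1 Hr]].
    exists (setU (head_set b0 b1) (greedy seq124 2 (v - head_value b0 b1))).
    replace v with (head_value b0 b1 + (v - head_value b0 b1)) at 2 by ring.
    apply subsum_setU_head, tail_rep_exists. auto.
Qed.

Lemma in_I_124 : in_I [1; 2; 4]%nat.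
Proof.
  exists seq124.
  split; [split; [apply seq124_pos|exists 8; apply infinite_sum_has_sum, seq124_sum]|].
  split; [|split].
  - exists [(0, 2); (3, 5); (6, 8)]. split; [|apply achievement_set_seq124].
    intros p Hp. destruct Hp as [<-|[<-|[<-|[]]]]; simpl; lra.
  - intros v Hv. apply achievement_set_subsum in Hv as [e He].
    set (t := v - head_value (e O) (e 1%nat)).
    destruct (tail_reps_listed t) as [L [HLl [Hnd HL]]]; [eexists; apply tail_rep_drop_head, He|].
    pose proof (has_card_seq124 v (e O) (e 1%nat) L Hnd) as Hc.
    eexists. split; [|apply Hc; auto; intro; subst; simpl in HLl; lia].
    unfold head_pairs. destruct (e O), (e 1%nat); simpl; destruct HLl as [-> | ->]; simpl; tauto.
  - intros n Hn. destruct Hn as [<-|[<-|[<-|[]]]].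
    + eexists. apply (seq124_card_at false false 0 [fun _ => false]);
        [repeat constructor; auto|congruence|apply tail_reps_0].
    + eexists. apply (seq124_card_at true false 0 [fun _ => false]);
        [repeat constructor; auto|congruence|apply tail_reps_0].
    + eexists. apply (seq124_card_at true false 1 [single 2; above 2]);
        [|congruence|apply tail_reps_1].
      repeat constructor; [|auto]. intros [E|[]]. revert E. differ_at 3%nat.
Qed.

Theorem theorem6p9 : in_I (1 :: 2 :: 4 :: nil)%nat /\ ~ in_I1 (1 :: 2 :: 4 :: nil)%nat.
Proof. split; [apply in_I_124|apply not_in_I1_124]. Qed.
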